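(* Let $Q$ be an admissible orientation of $\tilde A_n$ and let $I,J$ be two-sided ideals of $\Bbbk Q$. Then the multiplication map $\varphi_{I,J}:I\otimes_{\Bbbk Q}J\to IJ$, $a\otimes b\mapsto ab$, is an isomorphism of $\Bbbk Q$-$\Bbbk Q$-bimodules.
   Context: $\Bbbk$ is an algebraically closed field. An admissible orientation of $\tilde A_n$ is a finite quiver with $n$ vertices whose underlying undirected graph is a cycle, with no oriented cycle and at least one source. $IJ$ denotes the ideal spanned by all products $ab$ with $a\in I$, $b\in J$. *)

From HB Require Import structures.
From mathcomp Require Import all_boot all_order all_algebra.
Set Implicit Arguments. Unset Strict Implicit. Unset Printing Implicit Defensive.
Import GRing.Theory.
Local Open Scope ring_scope.

Section PathAlgebra.
Variables (K : fieldType) (V E : finType) (s t : E -> V).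

(* A path is a starting vertex v and a list of arrows e1 ... ek
   (traversed left to right); the trivial path at v is (v, [::]). *)
Fixpoint path_ok (v : V) (p : seq E) : bool :=
  if p is e :: p' then (s e == v) && path_ok (t e) p' else true.

Fixpoint path_end (v : V) (p : seq E) : V :=
  if p is e :: p' then path_end (t e) p' else v.

(* Elements of the path algebra: K-valued functions on (v, p),
   vanishing outside genuine paths (finitely many, Q being acyclic). *)
Definition pelt := V -> seq E -> K.

Definition in_kQ (f : pelt) : Prop := forall v p, ~~ path_ok v p -> f v p = 0.

Definition pzero : pelt := fun _ _ => 0.
Definition padd (f g : pelt) : pelt := fun v p => f v p + g v p.
Definition popp (f : pelt) : pelt := fun v p => - f v p.

(* Product = linear extension of concatenation of paths
   (path p1 followed by path p2 when end(p1) = start(p2), else 0). *)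
Definition pmul (f g : pelt) : pelt := fun v p =>
  \sum_(i < (size p).+1) f v (take i p) * g (path_end v (take i p)) (drop i p).

Definition is_ideal (I : pelt -> Prop) : Prop :=
  [/\ forall x, I x -> in_kQ x,
      I pzero,
      forall x y, I x -> I y -> I (padd x y),
      forall x, I x -> I (popp x) &
      forall a x, in_kQ a -> I x -> I (pmul a x) /\ I (pmul x a)].

Inductive prod_ideal (I J : pelt -> Prop) : pelt -> Prop :=
  | pi_mul a b : I a -> J b -> prod_ideal I J (pmul a b)
  | pi_zero : prod_ideal I J pzero
  | pi_add x y : prod_ideal I J x -> prod_ideal I J y -> prod_ideal I J (padd x y).

(* The multiplication map I (x)_{kQ} J -> IJ, a (x) b |-> ab, is an
   isomorphism: i.e. (IJ, (a,b) |-> ab) satisfies the universal property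
   of the tensor product I (x)_{kQ} J: every kQ-balanced biadditive map
   beta : I x J -> W into an abelian group factors uniquely through an
   additive map IJ -> W. *)
Definition mult_map_iso (I J : pelt -> Prop) : Prop :=
  forall (W : zmodType) (beta : pelt -> pelt -> W),
    (forall a a' b, I a -> I a' -> J b -> beta (padd a a') b = beta a b + beta a' b) ->
    (forall a b b', I a -> J b -> J b' -> beta a (padd b b') = beta a b + beta a b') ->
    (forall a x b, I a -> in_kQ x -> J b -> beta (pmul a x) b = beta a (pmul x b)) ->
    exists g : pelt -> W,
      [/\ forall x y, prod_ideal I J x -> prod_ideal I J y -> g (padd x y) = g x + g y,
          forall a b, I a -> J b -> g (pmul a b) = beta a b &
          forall g' : pelt -> W,
            (forall x y, prod_ideal I J x -> prod_ideal I J y -> g' (padd x y) = g' x + g' y) ->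
            (forall a b, I a -> J b -> g' (pmul a b) = beta a b) ->
            forall x, prod_ideal I J x -> g' x = g x].

End PathAlgebra.

Definition underlying_cycle (n : nat) (V E : finType) (s t : E -> V) : Prop :=
  exists (vx : 'I_n -> V) (ar : 'I_n -> E),
    [/\ bijective vx, bijective ar &
        forall i, ((s (ar i) == vx i) && (t (ar i) == vx (ordS i)))
               || ((s (ar i) == vx (ordS i)) && (t (ar i) == vx i))].

Definition no_oriented_cycle (V E : finType) (s t : E -> V) : Prop :=
  forall v p, path_ok s t v p -> p != [::] -> path_end t v p != v.

Definition has_source (V E : finType) (s t : E -> V) : Prop :=
  exists v : V, forall e : E, t e != v.

Definition admissible_Atilde (n : nat) (V E : finType) (s t : E -> V) : Prop :=
  [/\ underlying_cycle n s t, no_oriented_cycle s t & has_source s t].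

From mathcomp Require Import all_boot all_order all_algebra.
From Stdlib Require Import Classical FunctionalExtensionality.
Set Implicit Arguments. Unset Strict Implicit. Unset Printing Implicit Defensive.
Import GRing.Theory.
Local Open Scope ring_scope.

(* Over an acyclic quiver kQ is hereditary: every right ideal [I] is a
   projective right kQ-module, witnessed by a dual basis [n_j] in [I] and right
   kQ-linear [f_j : I -> kQ] with [x = \sum_j n_j f_j(x)]. It is built for the
   elements of [I] vanishing on all paths of length [< l], by downward induction
   on [l]: for [l] larger than every path only [0] is concerned, and the
   condition at a path [p] of length [l] is released by adding some [n] in [I]
   with coefficient [c <> 0] at [p] and [f(x) = c^-1 p^-1 x], the left quotient
   of [x] by [p], since [x - n f(x)] then vanishes at [p] too.
   A balanced map [beta] then factors through [IJ] as
   [x |-> \sum_j beta (n_j, f_j x)], because [f_j (a b) = f_j(a) b] lies in [J]. *)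

Section AcyclicQuiver.
Variables (V E : finType) (s t : E -> V).
Hypothesis acyclic : no_oriented_cycle s t.

Fixpoint path_verts v (p : seq E) : seq V :=
  v :: (if p is e :: p' then path_verts (t e) p' else [::]).

Lemma size_path_verts v p : size (path_verts v p) = (size p).+1.
Proof. by elim: p v => [|e p IH] v //=; rewrite IH. Qed.

Lemma mem_path_verts u p w : w \in path_verts u p -> exists i, path_end t u (take i p) = w.
Proof.
elim: p u => [|e p IH] u /=; first by rewrite inE => /eqP ->; exists 0%N.
by rewrite inE => /orP [/eqP ->|/IH [i <-]]; [exists 0%N | exists i.+1].
Qed.

Lemma path_ok_take u p i : path_ok s t u p -> path_ok s t u (take i p).
Proof.
elim: p u i => [|e p IH] u [|i] /= ok //.
by case/andP: ok => -> ok; apply: IH.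
Qed.

Lemma uniq_path_verts v p : path_ok s t v p -> uniq (path_verts v p).
Proof.
elim: p v => [|e p IH] v //= /andP [/eqP se ok]; rewrite IH // andbT.
apply/negP => /mem_path_verts [i back].
have := acyclic (p := e :: take i p) (v := v).
by rewrite /= se eqxx path_ok_take //= back eqxx => /(_ isT isT).
Qed.

Lemma path_bound v p : path_ok s t v p -> (size p < #|V|)%N.
Proof.
move=> ok; rewrite -ltnS -(size_path_verts v p) -(card_uniqP (uniq_path_verts ok)) ltnS.
exact: max_card.
Qed.

End AcyclicQuiver.

Section PathAlgebra.
Variables (K : fieldType) (V E : finType) (s t : E -> V).
Local Notation pel := (pelt K V E).
Local Notation mul := (@pmul K V E t).
Local Notation kQ := (in_kQ s t).
Local Notation pz := (@pzero K V E).

Lemma pelt_ext (f g : pel) : (forall v q, f v q = g v q) -> f = g.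
Proof. by move=> fg; do 2 (apply: functional_extensionality => ?); apply: fg. Qed.

Lemma pmul_nil f g v : mul f g v [::] = f v [::] * g v [::].
Proof. by rewrite /pmul big_ord_recl big_ord0 /= addr0. Qed.

Lemma pmul_cons f g v e p :
  mul f g v (e :: p) = f v [::] * g v (e :: p) + mul (fun _ q => f v (e :: q)) g (t e) p.
Proof. by rewrite /pmul big_ord_recl. Qed.

Lemma pmul_ext f f' g v p : (forall q, f v q = f' v q) -> mul f g v p = mul f' g v p.
Proof. by move=> ff'; apply: eq_bigr => i _; rewrite ff'. Qed.

Lemma pmul_addl f f' g v p : mul (padd f f') g v p = mul f g v p + mul f' g v p.
Proof. by rewrite /pmul -big_split; apply: eq_bigr => i _; rewrite /padd mulrDl. Qed.

Lemma pmul_addr f g g' v p : mul f (padd g g') v p = mul f g v p + mul f g' v p.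
Proof. by rewrite /pmul -big_split; apply: eq_bigr => i _; rewrite /padd mulrDr. Qed.

Lemma pmul_oppl f g v p : mul (popp f) g v p = - mul f g v p.
Proof. by rewrite /pmul -sumrN; apply: eq_bigr => i _; rewrite /popp mulNr. Qed.

Lemma pmul_scalel c f g v p : mul (fun w q => c * f w q) g v p = c * mul f g v p.
Proof. by rewrite /pmul mulr_sumr; apply: eq_bigr => i _; rewrite mulrA. Qed.

Lemma pmulr0 f : mul f pz = pz.
Proof. by apply: pelt_ext => v q; apply: big1 => i _; rewrite mulr0. Qed.

Lemma pmul_assoc f g h v p : mul (mul f g) h v p = mul f (mul g h) v p.
Proof.
elim: p f v => [|e p IH] f v; first by rewrite !pmul_nil mulrA.
rewrite !pmul_cons pmul_nil (@pmul_ext _ (padd (fun w q => f v [::] * g v (e :: q))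
  (mul (fun _ q => f v (e :: q)) g))) => [|q]; last by rewrite pmul_cons.
by rewrite pmul_addl pmul_scalel IH mulrDr !mulrA addrA.
Qed.

Lemma pmul_vanish x y v q : (forall i, x v (take i q) = 0) -> mul x y v q = 0.
Proof. by move=> x0; apply: big1 => i _; rewrite x0 mul0r. Qed.

Lemma pmul_cat x y v p r : (forall i, (i < size p)%N -> x v (take i p) = 0) ->
  mul x y v (p ++ r) = mul (fun _ r' => x v (p ++ r')) y (path_end t v p) r.
Proof.
elim: p v x => [|e p IH] v x x0 /=; first exact: pmul_ext.
rewrite pmul_cons (x0 0%N) // mul0r add0r (IH _ (fun _ q => x v (e :: q))) //.
by move=> i; apply: (x0 i.+1).
Qed.

Lemma path_ok_cat v p r :
  path_ok s t v (p ++ r) = path_ok s t v p && path_ok s t (path_end t v p) r.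
Proof. by elim: p v => [|e p IH] v //=; rewrite IH andbA. Qed.

Definition vanishes_on (P : V -> seq E -> bool) (x : pel) := forall v q, P v q -> x v q = 0.

Definition prefix_closed (P : V -> seq E -> bool) := forall v q i, P v q -> P v (take i q).

Lemma vanishes_on_pmul P x y : prefix_closed P -> vanishes_on P x -> vanishes_on P (mul x y).
Proof. by move=> Pp xP v q Pvq; apply: pmul_vanish => i; apply/xP/Pp. Qed.

(* [c] times the left quotient of [x] by the path [q0] starting at [v0]. *)
Definition pstrip (c : K) (v0 : V) (q0 : seq E) (x : pel) : pel :=
  fun w r => if w == path_end t v0 q0 then c * x v0 (q0 ++ r) else 0.

Lemma pstrip_kQ c v0 q0 x : kQ x -> kQ (pstrip c v0 q0 x).
Proof.
move=> kx w r; rewrite /pstrip; case: eqP => // -> nok.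
by rewrite kx ?mulr0 // path_ok_cat negb_and nok orbT.
Qed.

Lemma pstripD c v0 q0 x y :
  pstrip c v0 q0 (padd x y) = padd (pstrip c v0 q0 x) (pstrip c v0 q0 y).
Proof. by apply: pelt_ext => w r; rewrite /pstrip /padd; case: eqP; rewrite ?mulrDr ?addr0. Qed.

Lemma pstripM c v0 q0 x y : (forall i, (i < size q0)%N -> x v0 (take i q0) = 0) ->
  pstrip c v0 q0 (mul x y) = mul (pstrip c v0 q0 x) y.
Proof.
move=> x0; apply: pelt_ext => w r; rewrite /pstrip; case: eqP => [->|/eqP/negbTE ne].
  by rewrite pmul_cat // -pmul_scalel; apply: pmul_ext => q; rewrite eqxx.
by rewrite pmul_vanish // => i; rewrite ne.
Qed.

Lemma pmul_pstrip n c v0 q0 x : (forall i, (i < size q0)%N -> n v0 (take i q0) = 0) ->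
  mul n (pstrip c v0 q0 x) v0 q0 = n v0 q0 * (c * x v0 q0).
Proof.
move=> n0; have := pmul_cat (pstrip c v0 q0 x) [::] n0.
by rewrite cats0 pmul_nil /pstrip eqxx cats0.
Qed.

Definition is_right_ideal (I : pel -> Prop) :=
  [/\ forall x, I x -> kQ x, I pz, forall x y, I x -> I y -> I (padd x y),
      forall x, I x -> I (popp x) & forall a x, kQ a -> I x -> I (mul x a)].

Definition is_left_ideal (J : pel -> Prop) :=
  [/\ forall x, J x -> kQ x, J pz, forall x y, J x -> J y -> J (padd x y),
      forall x, J x -> J (popp x) & forall a x, kQ a -> J x -> J (mul a x)].

Lemma is_ideal_right I : is_ideal s t I -> is_right_ideal I.
Proof. by case=> ? ? ? ? IM; split=> // a x ka Ix; case: (IM a x ka Ix). Qed.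

Lemma is_ideal_left J : is_ideal s t J -> is_left_ideal J.
Proof. by case=> ? ? ? ? JM; split=> // a x ka Jx; case: (JM a x ka Jx). Qed.

Definition rlinear_on (D : pel -> Prop) (f : pel -> pel) :=
  (forall x y, D x -> D y -> f (padd x y) = padd (f x) (f y)) /\
  (forall x a, D x -> kQ a -> f (mul x a) = mul (f x) a).

(* For [D = I] this is the dual basis criterion for [I] to be a projective
   right kQ-module. *)
Definition dual_basis (I D : pel -> Prop) :=
  exists m (ns : 'I_m -> pel) (fs : 'I_m -> pel -> pel),
  [/\ forall j, I (ns j), forall j x, D x -> kQ (fs j x), forall j, rlinear_on D (fs j) &
      forall x, D x -> forall v q, x v q = \sum_(j < m) mul (ns j) (fs j x) v q].

Lemma dual_basis_sub I D D' : (forall x, D x -> D' x) -> dual_basis I D' -> dual_basis I D.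
Proof.
move=> DD' [m [ns [fs [Ins kfs fslin dec]]]]; exists m, ns, fs.
split=> // [j x /DD' /kfs //|j|x /DD' /dec //].
by have [fsD fsM] := fslin j; split=> [x y /DD' Dx /DD' Dy|x a /DD' Dx ka]; [apply: fsD|apply: fsM].
Qed.

Lemma rlinear_on_comp D D' f g :
  (forall x, D x -> D' (g x)) -> rlinear_on D' f -> rlinear_on D g ->
  rlinear_on D (fun x => f (g x)).
Proof.
move=> gD [fD fM] [gD' gM]; split=> [x y Dx Dy | x a Dx ka].
  by rewrite gD' // fD //; apply: gD.
by rewrite gM // fM //; apply: gD.
Qed.

Lemma rlinear_on_subr_mul D n f :
  rlinear_on D f -> rlinear_on D (fun x => padd x (popp (mul n (f x)))).
Proof.
move=> [fD fM]; split=> [x y Dx Dy|x a Dx ka]; apply: pelt_ext => v q.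
  by rewrite fD // /padd /popp pmul_addr opprD addrACA.
by rewrite fM // /padd /popp pmul_addl pmul_oppl pmul_assoc.
Qed.

Lemma dual_basis_cons I D D' n f :
  I n -> (forall x, D x -> kQ (f x)) -> rlinear_on D f ->
  (forall x, D x -> D' (padd x (popp (mul n (f x))))) ->
  dual_basis I D' -> dual_basis I D.
Proof.
move=> In kf flin rD [m [ns [fs [Ins kfs fslin dec]]]].
pose r x := padd x (popp (mul n (f x))).
exists m.+1, (fun i => if unlift ord0 i is Some j then ns j else n),
  (fun i => if unlift ord0 i is Some j then fun x => fs j (r x) else f).
split=> [i|i x Dx|i|x Dx v q]; first by case: unliftP.
- by case: unliftP => [j _|_]; [apply/kfs/rD | apply: kf].
- case: unliftP => [j _|_] //.
  exact: rlinear_on_comp rD (fslin j) (rlinear_on_subr_mul n flin).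
rewrite big_ord_recl unlift_none.
under eq_bigr => j _ do rewrite liftK.
by rewrite -dec ?/r ?/padd ?/popp; [rewrite addrC subrK | apply: rD].
Qed.

Section DualBasisExtension.
Variables (I : pel -> Prop) (P : V -> seq E -> bool) (v0 : V) (q0 : seq E).
Hypotheses (I_right : is_right_ideal I) (P_prefix : prefix_closed P)
  (P_q0 : forall i, (i < size q0)%N -> P v0 (take i q0)).

Local Notation D P := (fun x => I x /\ vanishes_on P x).

Lemma vanishes_below_q0 x :
  vanishes_on P x -> forall i, (i < size q0)%N -> x v0 (take i q0) = 0.
Proof. by move=> xP i /P_q0; apply: xP. Qed.

(* Either every element of [I] vanishing on [P] vanishes at [q0], or some such
   [n] has coefficient [c <> 0] there and [x - n (c^-1 q0^-1 x)] vanishes at [q0]. *)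
Lemma dual_basis_extend :
  dual_basis I (D (fun v q => P v q || (v == v0) && (q == q0))) -> dual_basis I (D P).
Proof.
have [kI _ ID IN IM] := I_right.
case: (classic (exists2 n, D P n & n v0 q0 != 0)) => [[n [In nP] nq0] | no_n]; last first.
  apply: dual_basis_sub => x [Ix xP]; split=> // v q /orP [/xP //|/andP [/eqP -> /eqP ->]].
  by case: (eqVneq (x v0 q0) 0) => // xq0; case: no_n; exists x.
apply: (@dual_basis_cons _ _ _ n (pstrip (n v0 q0)^-1 v0 q0)) => //.
- by move=> x [/kI kx _]; apply: pstrip_kQ.
- split=> [x y _ _|x a [_ xP] _]; first exact: pstripD.
  exact/pstripM/vanishes_below_q0.
move=> x [Ix xP]; split.
  by apply/ID/IN/IM => //; apply/pstrip_kQ/kI.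
move=> v q /orP [Pvq|/andP [/eqP -> /eqP ->]].
  by rewrite /padd /popp xP // (vanishes_on_pmul _ P_prefix nP) // oppr0 addr0.
rewrite /padd /popp pmul_pstrip; last exact: vanishes_below_q0.
by rewrite mulrA mulfV // mul1r subrr.
Qed.

End DualBasisExtension.

Section Levels.
Variable I : pel -> Prop.
Hypothesis I_right : is_right_ideal I.

Local Notation DB P := (dual_basis I (fun x => I x /\ vanishes_on P x)).

Lemma dual_basis_vanishing_sub (P P' : V -> seq E -> bool) :
  (forall v q, P v q -> P' v q) -> DB P -> DB P'.
Proof. by move=> PP'; apply: dual_basis_sub => x [Ix xP']; split=> // v q /PP' /xP'. Qed.

Lemma dual_basis_extend_seq l (a : seq (V * seq E)) : all (fun vq => size vq.2 == l) a ->
  DB (fun v q => (size q < l)%N || ((v, q) \in a)) -> DB (fun v q => (size q < l)%N).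
Proof.
elim: a => [|[v0 q0] a IH] /=.
  by move=> _; apply: dual_basis_vanishing_sub => v q; rewrite in_nil orbF.
move=> /andP [/eqP q0l al] DBa; apply: IH => //.
apply: (dual_basis_extend (v0 := v0) (q0 := q0) I_right) => [v q i /orP [ql|qa] | i iq0 |].
- by rewrite size_take_min (leq_ltn_trans (geq_minr _ _)).
- have /eqP ql := allP al _ qa; case: (ltnP i (size q)) => [iq|qi].
    by rewrite size_take iq -ql iq.
  by rewrite take_oversize // qa orbT.
- by rewrite size_take iq0 -q0l iq0.
apply: dual_basis_vanishing_sub DBa => v q; rewrite in_cons xpair_eqE.
by case/or3P=> ->; rewrite ?orbT.
Qed.

Lemma dual_basis_extend_level l :
  DB (fun v q => (size q < l.+1)%N) -> DB (fun v q => (size q < l)%N).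
Proof.
move=> DBl; pose a := [seq (v, tval w) | v <- enum V, w <- enum {: l.-tuple E}].
apply: (@dual_basis_extend_seq l a).
  by apply/allP => _ /allpairsP [[v w] [_ _ ->]]; rewrite /= size_tuple.
apply: dual_basis_vanishing_sub DBl => v q; rewrite ltnS leq_eqVlt => /orP [ql|->//].
rewrite (_ : q = tval (Tuple ql)) //.
by rewrite (allpairs_f (fun v (w : l.-tuple E) => (v, tval w))) ?mem_enum ?orbT.
Qed.

Lemma right_ideal_dual_basis : no_oriented_cycle s t -> dual_basis I I.
Proof.
move=> acyclic; have [kI _ _ _ _] := I_right.
have DBbound : DB (fun v q => (size q < #|V|)%N).
  exists 0%N, (fun _ => pz), (fun _ x => x); split=> [[]//|[]//|[]//|x [Ix xP] v q].
  rewrite big_ord0; case: (boolP (path_ok s t v q)) => [ok|]; last exact: kI.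
  exact: xP _ _ (path_bound acyclic ok).
have DB0 : DB (fun v q => (size q < 0)%N).
  by elim: #|V| DBbound => // l IH /dual_basis_extend_level /IH.
by apply: dual_basis_sub DB0 => x Ix; split=> // v q.
Qed.

End Levels.

Definition psum m (F : 'I_m -> pel) : pel := fun v q => \sum_(j < m) F j v q.

Lemma psum0 (F : 'I_0 -> pel) : psum F = pz.
Proof. by apply: pelt_ext => v q; rewrite /psum big_ord0. Qed.

Lemma psumS m (F : 'I_m.+1 -> pel) : psum F = padd (F ord0) (psum (fun j => F (lift ord0 j))).
Proof. by apply: pelt_ext => v q; rewrite /psum big_ord_recl. Qed.

Section AdditiveMaps.
Variables (W : zmodType) (D : pel -> Prop).
Hypotheses (D0 : D pz) (DD : forall x y, D x -> D y -> D (padd x y)).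

Lemma psum_closed m (F : 'I_m -> pel) : (forall j, D (F j)) -> D (psum F).
Proof.
elim: m F => [|m IH] F DF; first by rewrite psum0.
by rewrite psumS; apply: DD => //; apply: IH.
Qed.

Variable h : pel -> W.
Hypothesis hD : forall x y, D x -> D y -> h (padd x y) = h x + h y.

Lemma additive_pzero : h pz = 0.
Proof.
have pz2 : padd pz pz = pz by apply: pelt_ext => v q; rewrite /padd addr0.
by apply: (@addrI _ (h pz)); rewrite addr0 -hD // pz2.
Qed.

Lemma additive_psum m (F : 'I_m -> pel) : (forall j, D (F j)) -> h (psum F) = \sum_(j < m) h (F j).
Proof.
elim: m F => [|m IH] F DF; first by rewrite psum0 big_ord0 additive_pzero.
by rewrite psumS hD ?big_ord_recl ?IH //; apply: psum_closed.
Qed.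

End AdditiveMaps.

Section MultiplicationMap.
Variables (I J : pel -> Prop).
Hypotheses (I_right : is_right_ideal I) (J_left : is_left_ideal J).
Local Notation IJ := (prod_ideal t I J).

Lemma prod_ideal_sub x : IJ x -> I x.
Proof.
have [kJ _ _ _ _] := J_left; have [_ I0 ID _ IM] := I_right.
by elim=> [a b Ia /kJ kb | | x' y' _ ? _ ?]; [apply: IM | | apply: ID].
Qed.

Lemma prod_ideal_additive_eq (W : zmodType) (g g' : pel -> W) :
  (forall x y, IJ x -> IJ y -> g (padd x y) = g x + g y) ->
  (forall x y, IJ x -> IJ y -> g' (padd x y) = g' x + g' y) ->
  (forall a b, I a -> J b -> g (mul a b) = g' (mul a b)) ->
  forall x, IJ x -> g x = g' x.
Proof.
move=> gD g'D gg' x; elim=> [a b Ia Jb | | y z IJy gy IJz gz]; first exact: gg'.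
  by rewrite (additive_pzero (pi_zero t I J) gD) (additive_pzero (pi_zero t I J) g'D).
by rewrite gD // g'D // gy gz.
Qed.

Lemma dual_basis_mult_map_iso : dual_basis I I -> mult_map_iso s t I J.
Proof.
move=> [m [ns [fs [Ins kfs fslin dec]]]] W beta betaDl betaDr betaM.
have [_ I0 ID _ IM] := I_right; have [kJ J0 JD _ JM] := J_left.
have fsJ j x : IJ x -> J (fs j x).
  elim=> [a b Ia Jb | | x' y' IJx' Jx' IJy' Jy'].
  - by rewrite (fslin j).2 //; [apply: JM => //; apply: kfs | apply: kJ].
  - by rewrite -(pmulr0 pz) (fslin j).2 ?pmulr0.
  - by rewrite (fslin j).1; [apply: JD | apply: prod_ideal_sub..].
pose g x := \sum_(j < m) beta (ns j) (fs j x).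
have gD x y : IJ x -> IJ y -> g (padd x y) = g x + g y.
  move=> IJx IJy; rewrite /g -big_split; apply: eq_bigr => j _.
  rewrite (fslin j).1; try exact: prod_ideal_sub.
  exact: betaDr (Ins j) (fsJ j x IJx) (fsJ j y IJy).
have gM a b : I a -> J b -> g (mul a b) = beta a b.
  move=> Ia Jb; transitivity (\sum_(j < m) beta (mul (ns j) (fs j a)) b).
    apply: eq_bigr => j _; have kb := kJ _ Jb; have kfa := kfs j a Ia.
    by rewrite (fslin j).2 ?betaM.
  have nsfsI j : I (mul (ns j) (fs j a)) by apply: IM; [apply: kfs | apply: Ins].
  rewrite -(additive_psum I0 ID (h := beta^~ b)) // => [|x y Ix Iy]; last exact: betaDl.
  by congr (beta _ b); apply: pelt_ext => v q; rewrite [RHS]dec.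
exists g; split=> // g' g'D g'M x IJx.
by apply: prod_ideal_additive_eq => // a b Ia Jb; rewrite g'M // gM.
Qed.

End MultiplicationMap.

End PathAlgebra.

Theorem lemma10 (k : closedFieldType) (n : nat) (V E : finType) (s t : E -> V)
  (I J : pelt k V E -> Prop) :
  admissible_Atilde n s t ->
  is_ideal s t I -> is_ideal s t J ->
  mult_map_iso s t I J.
Proof.
move=> [_ acyclic _] /is_ideal_right I_right /is_ideal_left J_left.
exact: dual_basis_mult_map_iso J_left (right_ideal_dual_basis I_right acyclic).
Qed.
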